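(* Let $({\mathcal B};{\mathcal V},{\mathcal H};{\mathcal P})$ be a slim (discrete) double groupoid satisfying the filling condition, and let $(f_1,x_1),(f_2,x_2)\in{\mathcal V}\times_{b,l}{\mathcal H}$. Then $(f_1,x_1)\sim_{\mathcal B}(f_2,x_2)$ if and only if there exist $x\in{\mathcal H}$, $g\in{\mathcal V}$ and boxes $A,B\in{\mathcal B}$ with $t(A)=x,\ r(A)=g,\ l(A)=f_1,\ b(A)=x_1$ and $t(B)=x,\ r(B)=g,\ l(B)=f_2,\ b(B)=x_2$.
   Context: Double groupoid $({\mathcal B};{\mathcal V},{\mathcal H};{\mathcal P})$: ${\mathcal V}$ and ${\mathcal H}$ are groupoids over ${\mathcal P}$ (for ${\mathcal V}$ source/end $t,b$; for ${\mathcal H}$ source/end $l,r$); ${\mathcal B}$ is a set of boxes $A$ with top/bottom sides $t(A),b(A)\in{\mathcal H}$ and left/right sides $l(A),r(A)\in{\mathcal V}$, with a horizontal groupoid structure over ${\mathcal V}$ (source $l$, target $r$) and a vertical groupoid structure over ${\mathcal H}$ (source $t$, target $b$), compatible in the sense that the structure maps of each are morphisms for the other. Slim: each box is determined by its four sides. Filling condition: for every $x\in{\mathcal H}$, $f\in{\mathcal V}$ with $l(x)=t(f)$ there is a box with top $x$ and left side $f$. ${\mathcal V}\circledast{\mathcal H}$ is the free product groupoid of ${\mathcal V}$ and ${\mathcal H}$ over ${\mathcal P}$. For a box $A$ with top $x$, right $g$, bottom $y$, left $h$, $[A]=xgy^{-1}h^{-1}\in{\mathcal V}\circledast{\mathcal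 H}$, and $J_\circledast({\mathcal B})$ is the subgroupoid generated by all $[A]$. The relation $\sim_{\mathcal B}$ on ${\mathcal V}\times_{b,l}{\mathcal H}=\{(f,x):b(f)=l(x)\}$ is: $(f_1,x_1)\sim_{\mathcal B}(f_2,x_2)$ iff $r(x_1)=r(x_2)$, $t(f_1)=t(f_2)$ and $f_1x_1x_2^{-1}f_2^{-1}\in J_\circledast({\mathcal B})$. *)

From Stdlib Require Import List Relations.
Import ListNotations.
Set Implicit Arguments.
Unset Strict Implicit.

(* Composition is written diagrammatically: gcomp f g = "f then g",    *)
(* defined (meaningfully) when gtgt f = gsrc g.                        *)
Record groupoid_on (P A : Type) := Groupoid {
  gsrc : A -> P;
  gtgt : A -> P;
  gid : P -> A;
  gcomp : A -> A -> A;
  ginv : A -> A;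
  gsrc_id : forall p, gsrc (gid p) = p;
  gtgt_id : forall p, gtgt (gid p) = p;
  gsrc_comp : forall f g, gtgt f = gsrc g -> gsrc (gcomp f g) = gsrc f;
  gtgt_comp : forall f g, gtgt f = gsrc g -> gtgt (gcomp f g) = gtgt g;
  gcompA : forall f g h, gtgt f = gsrc g -> gtgt g = gsrc h ->
             gcomp (gcomp f g) h = gcomp f (gcomp g h);
  gcomp_id_l : forall f, gcomp (gid (gsrc f)) f = f;
  gcomp_id_r : forall f, gcomp f (gid (gtgt f)) = f;
  gsrc_inv : forall f, gsrc (ginv f) = gtgt f;
  gtgt_inv : forall f, gtgt (ginv f) = gsrc f;
  gcomp_inv_r : forall f, gcomp f (ginv f) = gid (gsrc f);
  gcomp_inv_l : forall f, gcomp (ginv f) f = gid (gtgt f)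
}.

Definition is_gmorph (P A Q B : Type) (GA : groupoid_on P A) (GB : groupoid_on Q B)
  (F : A -> B) (F0 : P -> Q) : Prop :=
  (forall f, gsrc GB (F f) = F0 (gsrc GA f)) /\
  (forall f, gtgt GB (F f) = F0 (gtgt GA f)) /\
  (forall p, F (gid GA p) = gid GB (F0 p)) /\
  (forall f g, gtgt GA f = gsrc GA g -> F (gcomp GA f g) = gcomp GB (F f) (F g)).

(*  V : vertical groupoid over P, source t, target b.                  *)
(*  H : horizontal groupoid over P, source l, target r.                *)
(*  B : boxes; horizontal groupoid over V (source l, target r) and     *)
(*      vertical groupoid over H (source t, target b).                 *)
Record double_groupoid (P V H B : Type) := DoubleGroupoid {
  dV : groupoid_on P V;
  dH : groupoid_on P H;
  dBh : groupoid_on V B;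
  dBv : groupoid_on H B;
  dg_t_morph : is_gmorph dBh dH (gsrc dBv) (gsrc dV);
  dg_b_morph : is_gmorph dBh dH (gtgt dBv) (gtgt dV);
  dg_l_morph : is_gmorph dBv dV (gsrc dBh) (gsrc dH);
  dg_r_morph : is_gmorph dBv dV (gtgt dBh) (gtgt dH);
  dg_idh_morph : is_gmorph dV dBv (gid dBh) (gid dH);
  dg_idv_morph : is_gmorph dH dBh (gid dBv) (gid dV);
  dg_invh_morph : is_gmorph dBv dBv (ginv dBh) (ginv dH);
  dg_invv_morph : is_gmorph dBh dBh (ginv dBv) (ginv dV);
  dg_interchange : forall A1 A2 C1 C2,
      gtgt dBh A1 = gsrc dBh A2 -> gtgt dBh C1 = gsrc dBh C2 ->
      gtgt dBv A1 = gsrc dBv C1 -> gtgt dBv A2 = gsrc dBv C2 ->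
      gcomp dBv (gcomp dBh A1 A2) (gcomp dBh C1 C2)
      = gcomp dBh (gcomp dBv A1 C1) (gcomp dBv A2 C2)
}.

Section Notions.
Variables (P V H B : Type) (D : double_groupoid P V H B).

Definition bt (A : B) : H := gsrc (dBv D) A.
Definition bb (A : B) : H := gtgt (dBv D) A.
Definition bl (A : B) : V := gsrc (dBh D) A.
Definition br (A : B) : V := gtgt (dBh D) A.

Definition slim : Prop :=
  forall A A' : B, bt A = bt A' -> bb A = bb A' -> bl A = bl A' -> br A = br A' -> A = A'.

Definition filling : Prop :=
  forall (x : H) (f : V), gsrc (dH D) x = gsrc (dV D) f ->
    exists A : B, bt A = x /\ bl A = f.

(* Free product groupoid V [*] H over P: morphisms are composable      *)
(* words in letters from V and H (diagrammatic order), modulo the      *)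
(* congruence generated by composing adjacent letters from the same    *)
(* groupoid and deleting identity letters.  A morphism is represented  *)
(* by a start object p and a word valid from p.                        *)
Definition letter := (V + H)%type.

Definition lsrc (a : letter) : P :=
  match a with inl f => gsrc (dV D) f | inr x => gsrc (dH D) x end.
Definition ltgt (a : letter) : P :=
  match a with inl f => gtgt (dV D) f | inr x => gtgt (dH D) x end.

Fixpoint valid (p : P) (w : list letter) : Prop :=
  match w with
  | [] => True
  | a :: w' => lsrc a = p /\ valid (ltgt a) w'
  end.

Inductive fp_step : list letter -> list letter -> Prop :=
| fp_mergeV : forall w1 w2 f g, gtgt (dV D) f = gsrc (dV D) g ->
    fp_step (w1 ++ inl f :: inl g :: w2) (w1 ++ inl (gcomp (dV D) f g) :: w2)
| fp_mergeH : forall w1 w2 x y, gtgt (dH D) x = gsrc (dH D) y ->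
    fp_step (w1 ++ inr x :: inr y :: w2) (w1 ++ inr (gcomp (dH D) x y) :: w2)
| fp_idV : forall w1 w2 q, fp_step (w1 ++ inl (gid (dV D) q) :: w2) (w1 ++ w2)
| fp_idH : forall w1 w2 q, fp_step (w1 ++ inr (gid (dH D) q) :: w2) (w1 ++ w2).

Definition fp_rel (p : P) : relation (list letter) :=
  fun w w' => valid p w /\ valid p w' /\ fp_step w w'.

Definition fp_equiv (p : P) : relation (list letter) :=
  clos_refl_sym_trans _ (fp_rel p).

Definition box_word (A : B) : list letter :=
  [inr (bt A); inl (br A); inr (ginv (dH D) (bb A)); inl (ginv (dV D) (bl A))].

Definition box_word_inv (A : B) : list letter :=
  [inl (bl A); inr (bb A); inl (ginv (dV D) (br A)); inr (ginv (dH D) (bt A))].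

Definition signed_box_word (s : B * bool) : list letter :=
  if snd s then box_word (fst s) else box_word_inv (fst s).

(* membership in J_[*](B), the subgroupoid generated by all [A]:
   the morphism is (equal in V [*] H to) a composable product of
   generators [A] and their inverses (empty product = identity at p) *)
Definition inJ (p : P) (w : list letter) : Prop :=
  exists s : list (B * bool),
    valid p (flat_map signed_box_word s) /\ fp_equiv p (flat_map signed_box_word s) w.

Definition simB (fx1 fx2 : V * H) : Prop :=
  let (f1, x1) := fx1 in let (f2, x2) := fx2 in
  gtgt (dH D) x1 = gtgt (dH D) x2 /\
  gsrc (dV D) f1 = gsrc (dV D) f2 /\
  inJ (gsrc (dV D) f1)
      [inl f1; inr x1; inr (ginv (dH D) x2); inl (ginv (dV D) f2)].

End Notions.

(* "If": the product [A]^{-1} [B0] reduces in V [*] H to f1 x1 x2^{-1} f2^{-1}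
   by cancelling the adjacent letters x^{-1} x and g^{-1} g.

   "Only if": we let words of V [*] H act on "states", i.e. sets of pairs
   (top, right side).  A vertical letter h extends the right side by h, a
   horizontal letter y glues a box with bottom y to the right.  This action
   respects the defining relations of V [*] H (so it is well defined on
   morphisms), inverse words cancel, and, starting from the base state
   [base p] of boxes with bottom and left side identities, the word f y leads
   to the state [boxes_on f y] of all boxes with left side f and bottom y.
   Consequently a generator [A] = x g y^{-1} h^{-1} acts trivially on the base
   state, hence so does every element of J(B).  If f1 x1 x2^{-1} f2^{-1} is
   in J(B), cancelling gives boxes_on f1 x1 = boxes_on f2 x2, and the filling
   condition provides a box in the former set. *)

From Stdlib Require Import List Relations FunctionalExtensionality PropExtensionality.
Import ListNotations.
Set Implicit Arguments.
Unset Strict Implicit.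

Section GroupoidFacts.
Context {Ob Ar : Type} {G : groupoid_on Ob Ar}.

Lemma gcomp_id_l_at p f : gsrc G f = p -> gcomp G (gid G p) f = f.
Proof. intros <-; apply gcomp_id_l. Qed.

Lemma gcomp_id_r_at p f : gtgt G f = p -> gcomp G f (gid G p) = f.
Proof. intros <-; apply gcomp_id_r. Qed.

Lemma ginv_unique a b :
  gtgt G a = gsrc G b -> gcomp G a b = gid G (gsrc G a) -> b = ginv G a.
Proof.
  intros E1 E2.
  rewrite <- (gcomp_id_l G b), <- E1, <- gcomp_inv_l.
  rewrite gcompA; [| apply gtgt_inv | exact E1].
  rewrite E2. apply gcomp_id_r_at, gtgt_inv.
Qed.

Lemma ginv_involutive f : ginv G (ginv G f) = f.
Proof.
  symmetry; apply ginv_unique; [apply gtgt_inv |].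
  rewrite gcomp_inv_l, gsrc_inv; reflexivity.
Qed.

Lemma gcomp_cancel_r f g : gtgt G f = gsrc G g -> gcomp G (gcomp G f g) (ginv G g) = f.
Proof.
  intros E. rewrite gcompA; [| exact E | symmetry; apply gsrc_inv].
  rewrite gcomp_inv_r. apply gcomp_id_r_at; exact E.
Qed.

Lemma gcomp_cancel_l f g : gtgt G f = gsrc G g -> gcomp G (ginv G f) (gcomp G f g) = g.
Proof.
  intros E. rewrite <- gcompA; [| apply gtgt_inv | exact E].
  rewrite gcomp_inv_l. apply gcomp_id_l_at; symmetry; exact E.
Qed.

Lemma gcomp_inv_cancel_r f g : gtgt G f = gtgt G g -> gcomp G (gcomp G f (ginv G g)) g = f.
Proof.
  intros E. rewrite gcompA; [| rewrite gsrc_inv; exact E | apply gtgt_inv].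
  rewrite gcomp_inv_l. apply gcomp_id_r_at; exact E.
Qed.
End GroupoidFacts.

Lemma gmorph_inv (P A Q B : Type) (GA : groupoid_on P A) (GB : groupoid_on Q B)
  (F : A -> B) (F0 : P -> Q) :
  is_gmorph GA GB F F0 -> forall f, F (ginv GA f) = ginv GB (F f).
Proof.
  intros [Hs [Ht [Hi Hc]]] f. apply ginv_unique.
  - rewrite Ht, Hs, gsrc_inv; reflexivity.
  - rewrite <- Hc by (symmetry; apply gsrc_inv).
    rewrite gcomp_inv_r, Hi, Hs; reflexivity.
Qed.
Arguments gmorph_inv {P A Q B GA GB F F0} _ _.

Section DoubleGroupoid.
Context {P V H B : Type} (D : double_groupoid P V H B).
Hypothesis Hfill : filling D.

Local Notation cV := (gcomp (dV D)).
Local Notation cH := (gcomp (dH D)).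
Local Notation iV := (ginv (dV D)).
Local Notation iH := (ginv (dH D)).
Local Notation sV := (gsrc (dV D)).
Local Notation tV := (gtgt (dV D)).
Local Notation sH := (gsrc (dH D)).
Local Notation tH := (gtgt (dH D)).
Local Notation eV := (gid (dV D)).
Local Notation eH := (gid (dH D)).

Definition Box (t : H) (r : V) (b : H) (l : V) : Prop :=
  exists A, bt D A = t /\ br D A = r /\ bb D A = b /\ bl D A = l.

Lemma box_corners t r b l : Box t r b l ->
  sH t = sV l /\ tH t = sV r /\ sH b = tV l /\ tH b = tV r.
Proof.
  intros [A [<- [<- [<- <-]]]]. unfold bt, br, bb, bl.
  destruct (dg_t_morph D) as [Ts [Tt _]]. destruct (dg_b_morph D) as [Bs [Bt _]].
  auto.
Qed.

Lemma box_hcomp t1 r1 b1 l1 t2 r2 b2 :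
  Box t1 r1 b1 l1 -> Box t2 r2 b2 r1 -> Box (cH t1 t2) r2 (cH b1 b2) l1.
Proof.
  intros [A1 [E1 [E2 [E3 E4]]]] [A2 [F1 [F2 [F3 F4]]]].
  assert (K : gtgt (dBh D) A1 = gsrc (dBh D) A2) by (unfold br, bl in *; congruence).
  exists (gcomp (dBh D) A1 A2). unfold bt, br, bb, bl in *.
  destruct (dg_t_morph D) as [_ [_ [_ Tc]]]. destruct (dg_b_morph D) as [_ [_ [_ Bc]]].
  rewrite Tc, Bc, gtgt_comp, gsrc_comp by exact K. subst; auto.
Qed.

Lemma box_vcomp t1 r1 b1 l1 r2 b2 l2 :
  Box t1 r1 b1 l1 -> Box b1 r2 b2 l2 -> Box t1 (cV r1 r2) b2 (cV l1 l2).
Proof.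
  intros [A1 [E1 [E2 [E3 E4]]]] [A2 [F1 [F2 [F3 F4]]]].
  assert (K : gtgt (dBv D) A1 = gsrc (dBv D) A2) by (unfold bb, bt in *; congruence).
  exists (gcomp (dBv D) A1 A2). unfold bt, br, bb, bl in *.
  destruct (dg_l_morph D) as [_ [_ [_ Lc]]]. destruct (dg_r_morph D) as [_ [_ [_ Rc]]].
  rewrite Lc, Rc, gtgt_comp, gsrc_comp by exact K. subst; auto.
Qed.

Lemma box_hinv t r b l : Box t r b l -> Box (iH t) l (iH b) r.
Proof.
  intros [A [E1 [E2 [E3 E4]]]]. exists (ginv (dBh D) A). unfold bt, br, bb, bl in *.
  rewrite (gmorph_inv (dg_t_morph D)), (gmorph_inv (dg_b_morph D)), gtgt_inv, gsrc_inv.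
  subst; auto.
Qed.

Lemma box_vinv t r b l : Box t r b l -> Box b (iV r) t (iV l).
Proof.
  intros [A [E1 [E2 [E3 E4]]]]. exists (ginv (dBv D) A). unfold bt, br, bb, bl in *.
  rewrite (gmorph_inv (dg_l_morph D)), (gmorph_inv (dg_r_morph D)), gtgt_inv, gsrc_inv.
  subst; auto.
Qed.

Lemma box_hid k : Box (eH (sV k)) k (eH (tV k)) k.
Proof.
  exists (gid (dBh D) k). unfold bt, br, bb, bl.
  destruct (dg_t_morph D) as [_ [_ [Ti _]]]. destruct (dg_b_morph D) as [_ [_ [Bi _]]].
  rewrite Ti, Bi, gtgt_id, gsrc_id; auto.
Qed.

(* Filling from the bottom-left corner: fill (y, f^{-1}) and flip vertically. *)
Lemma box_fill_bottom_left y f : sH y = tV f -> exists t r, Box t r y f.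
Proof.
  intros E. destruct (@Hfill y (iV f)) as [A [E1 E2]].
  { rewrite gsrc_inv; exact E. }
  assert (BA : Box y (br D A) (bb D A) (iV f)) by (exists A; auto).
  apply box_vinv in BA. rewrite ginv_involutive in BA. eauto.
Qed.

(* Words of V [*] H act on states: sets of pairs (top, right side). *)
Definition state := H -> V -> Prop.

Lemma state_ext (S T : state) : (forall x g, S x g <-> T x g) -> S = T.
Proof.
  intros E. apply functional_extensionality; intro x.
  apply functional_extensionality; intro g. apply propositional_extensionality; auto.
Qed.

Definition act_letter (S : state) (a : letter V H) : state :=
  match a with
  | inl h => fun x g' => exists g, S x g /\ tV g = sV h /\ g' = cV g h
  | inr y => fun x' g' => exists x g z, S x g /\ Box z g' y g /\ x' = cH x z
  end.

Definition act (S : state) (w : list (letter V H)) : state := fold_left act_letter w S.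

Definition end_at (p : P) (w : list (letter V H)) : P := fold_left (fun _ a => ltgt D a) w p.

Definition state_at (q : P) (S : state) : Prop :=
  (forall x g, S x g -> tV g = q /\ tH x = sV g) /\
  (forall x g z r, S x g -> Box z r (eH q) g -> S (cH x z) r).

Definition base (p : P) : state := fun x g => Box x g (eH p) (eV p).

Definition boxes_on (f : V) (y : H) : state := fun x g => Box x g y f.

Lemma base_id p : base p (eH p) (eV p).
Proof. unfold base. pose proof (box_hid (eV p)) as K. rewrite gsrc_id, gtgt_id in K. exact K. Qed.

Lemma state_at_base p : state_at p (base p).
Proof.
  split.
  - intros x g Bx. destruct (box_corners Bx) as [_ [C2 [_ C4]]].
    rewrite gtgt_id in C4. auto.
  - intros x g z r Bx Bz. unfold base in *.
    pose proof (box_hcomp Bx Bz) as K. rewrite gcomp_id_l_at in K by apply gsrc_id. exact K.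
Qed.

(* For a vertical letter h, a box glued below level tV h is moved back to
   level q by stacking the identity box on h^{-1} under it. *)
Lemma state_at_V q S h : state_at q S -> sV h = q -> state_at (tV h) (act_letter S (inl h)).
Proof.
  intros [I1 I2] Eh. split.
  - intros x g' [g0 [HS [E ->]]]. destruct (I1 _ _ HS) as [F1 F2].
    rewrite gtgt_comp, gsrc_comp by exact E. auto.
  - intros x g' z r [g0 [HS [E ->]]] Bz. cbn.
    pose proof (box_hid (iV h)) as Hinv. rewrite gsrc_inv, gtgt_inv in Hinv.
    pose proof (box_vcomp Bz Hinv) as B2. rewrite gcomp_cancel_r in B2 by exact E.
    destruct (box_corners Bz) as [_ [_ [_ C4]]]. rewrite gtgt_id in C4.
    exists (cV r (iV h)). split; [| split].
    + eapply I2; [exact HS |]. rewrite <- Eh. exact B2.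
    + rewrite gtgt_comp; [apply gtgt_inv | rewrite gsrc_inv; congruence].
    + rewrite gcomp_inv_cancel_r by congruence. reflexivity.
Qed.

Lemma state_at_H q S y : state_at q S -> sH y = q -> state_at (tH y) (act_letter S (inr y)).
Proof.
  intros [I1 I2] Ey. split.
  - intros x' g' [x0 [g0 [z [HS [Bz ->]]]]]. destruct (I1 _ _ HS) as [F1 F2].
    destruct (box_corners Bz) as [C1 [C2 [C3 C4]]].
    rewrite gtgt_comp by congruence. auto.
  - intros x' g' z' r [x0 [g0 [z [HS [Bz ->]]]]] Bz'. cbn.
    pose proof (box_hcomp Bz Bz') as B2. rewrite gcomp_id_r_at in B2 by reflexivity.
    exists x0, g0, (cH z z'). split; [exact HS | split; [exact B2 |]].
    destruct (I1 _ _ HS) as [_ F2].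
    destruct (box_corners Bz) as [C1 [C2 _]]. destruct (box_corners Bz') as [D1 _].
    rewrite gcompA; [reflexivity | congruence | congruence].
Qed.

Lemma state_at_act p S w : state_at p S -> valid D p w -> state_at (end_at p w) (act S w).
Proof.
  revert p S; induction w as [| [h | y] w IH]; intros p S HS Hv; cbn in *.
  - exact HS.
  - destruct Hv as [E Hv]. apply IH; [eapply state_at_V; eauto | exact Hv].
  - destruct Hv as [E Hv]. apply IH; [eapply state_at_H; eauto | exact Hv].
Qed.

Lemma valid_app p w1 w2 : valid D p (w1 ++ w2) <-> valid D p w1 /\ valid D (end_at p w1) w2.
Proof.
  revert p; induction w1 as [| a w1 IH]; intros p; cbn.
  - tauto.
  - rewrite IH. unfold end_at; cbn. tauto.
Qed.

Lemma act_cons S a w : act S (a :: w) = act (act_letter S a) w.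
Proof. reflexivity. Qed.

Lemma act_app S w1 w2 : act S (w1 ++ w2) = act (act S w1) w2.
Proof. unfold act; apply fold_left_app. Qed.

Lemma act_V_comp S f g : tV f = sV g ->
  act_letter (act_letter S (inl f)) (inl g) = act_letter S (inl (cV f g)).
Proof.
  intros E. apply state_ext; intros x g'; cbn; split.
  - intros [g1 [[g0 [HS [E1 ->]]] [E2 ->]]]. exists g0. split; [exact HS | split].
    + rewrite gsrc_comp by exact E; exact E1.
    + rewrite gcompA; auto.
  - intros [g0 [HS [E1 ->]]]. rewrite gsrc_comp in E1 by exact E.
    exists (cV g0 f). split; [exists g0; auto | split].
    + rewrite gtgt_comp by exact E1; exact E.
    + rewrite gcompA; auto.
Qed.

Lemma act_V_id q S : state_at q S -> act_letter S (inl (eV q)) = S.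
Proof.
  intros [I1 _]. apply state_ext; intros x g'; cbn; split.
  - intros [g0 [HS [E ->]]]. rewrite gsrc_id in E. rewrite gcomp_id_r_at by exact E. exact HS.
  - intros HS. destruct (I1 _ _ HS) as [E _]. exists g'. rewrite gsrc_id.
    split; [exact HS | split; [exact E |]]. rewrite gcomp_id_r_at by exact E; reflexivity.
Qed.

Lemma act_H_id q S : state_at q S -> act_letter S (inr (eH q)) = S.
Proof.
  intros [I1 I2]. apply state_ext; intros x g'; cbn; split.
  - intros [x0 [g0 [z [HS [Bz ->]]]]]. eapply I2; eauto.
  - intros HS. destruct (I1 _ _ HS) as [E1 E2].
    exists x, g', (eH (sV g')). split; [exact HS | split].
    + pose proof (box_hid g') as K. rewrite E1 in K. exact K.
    + rewrite gcomp_id_r_at by exact E2; reflexivity.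
Qed.

(* Gluing boxes with bottoms x and y equals gluing one box with bottom x y;
   splitting a box uses the filling condition. *)
Lemma act_H_comp q S x y : state_at q S -> sH x = q -> tH x = sH y ->
  act_letter (act_letter S (inr x)) (inr y) = act_letter S (inr (cH x y)).
Proof.
  intros [I1 _] Ex Exy. apply state_ext; intros x' g'; cbn; split.
  - intros [x1 [g1 [z2 [[x0 [g0 [z1 [HS [B1 ->]]]]] [B2 ->]]]]].
    exists x0, g0, (cH z1 z2). split; [exact HS | split; [eapply box_hcomp; eauto |]].
    destruct (I1 _ _ HS) as [_ F]. destruct (box_corners B1) as [C1 [C2 _]].
    destruct (box_corners B2) as [C3 _].
    rewrite gcompA; [reflexivity | congruence | congruence].
  - intros [x0 [g0 [z [HS [Bz ->]]]]]. destruct (I1 _ _ HS) as [F1 F2].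
    (* A filler B1 over x; B1^{-1} glued to the given box has bottom y. *)
    destruct (box_fill_bottom_left (y:=x) (f:=g0)) as [t1 [r1 B1]]; [congruence |].
    pose proof (box_hcomp (box_hinv B1) Bz) as Split.
    rewrite gcomp_cancel_l in Split by exact Exy.
    destruct (box_corners B1) as [C1 _]. destruct (box_corners Bz) as [C3 _].
    exists (cH x0 t1), r1, (cH (iH t1) z).
    split; [exists x0, g0, t1; auto | split; [exact Split |]].
    rewrite <- gcompA; [| rewrite gtgt_comp, gsrc_inv by congruence; reflexivity
                        | rewrite gtgt_inv; congruence].
    rewrite gcomp_cancel_r by congruence. reflexivity.
Qed.

Lemma act_step p S w w' : state_at p S -> valid D p w -> fp_step D w w' -> act S w = act S w'.
Proof.
  intros HS Hv Hs.
  destruct Hs as [w1 w2 f g E | w1 w2 x y E | w1 w2 q | w1 w2 q];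
    rewrite !act_app; apply valid_app in Hv; destruct Hv as [Hv1 Hv2];
    pose proof (state_at_act HS Hv1) as HS1; cbn in Hv2; rewrite !act_cons.
  - rewrite act_V_comp by exact E. reflexivity.
  - destruct Hv2 as [E1 _]. rewrite (act_H_comp HS1 E1 E). reflexivity.
  - destruct Hv2 as [E1 _]. rewrite gsrc_id in E1. subst q. rewrite (act_V_id HS1). reflexivity.
  - destruct Hv2 as [E1 _]. rewrite gsrc_id in E1. subst q. rewrite (act_H_id HS1). reflexivity.
Qed.

Lemma act_fp_equiv p S w w' : state_at p S -> fp_equiv D p w w' -> act S w = act S w'.
Proof.
  intros HS He.
  induction He as [w w' [Hv [_ Hs]] | w | w w' _ IH | w1 w2 w3 _ IH1 _ IH2].
  - eapply act_step; eauto.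
  - reflexivity.
  - symmetry; exact IH.
  - congruence.
Qed.

Definition linv (a : letter V H) : letter V H :=
  match a with inl f => inl (iV f) | inr x => inr (iH x) end.

Definition winv (w : list (letter V H)) : list (letter V H) := rev (map linv w).

Lemma act_letter_cancel q S a : state_at q S -> lsrc D a = q ->
  act_letter (act_letter S a) (linv a) = S.
Proof.
  intros HS Ea. destruct a as [h | y]; cbn [linv lsrc] in *.
  - rewrite act_V_comp by (symmetry; apply gsrc_inv).
    rewrite gcomp_inv_r, Ea. exact (act_V_id HS).
  - rewrite (act_H_comp HS Ea) by (symmetry; apply gsrc_inv).
    rewrite gcomp_inv_r, Ea. exact (act_H_id HS).
Qed.

Lemma act_cancel q S w : state_at q S -> valid D q w -> act (act S w) (winv w) = S.
Proof.
  revert q S; induction w as [| a w IH]; intros q S HS Hv; [reflexivity |].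
  destruct Hv as [Ea Hv].
  assert (HSa : state_at (ltgt D a) (act_letter S a))
    by (destruct a; [eapply state_at_V | eapply state_at_H]; eauto).
  unfold winv; cbn [map rev]; fold (winv w).
  rewrite act_app. change (act_letter (act (act (act_letter S a) w) (winv w)) (linv a) = S).
  rewrite (IH _ _ HSa Hv). exact (act_letter_cancel HS Ea).
Qed.

Lemma act_injective q S T w : state_at q S -> state_at q T -> valid D q w ->
  act S w = act T w -> S = T.
Proof.
  intros HS HT Hv E.
  rewrite <- (act_cancel HS Hv), <- (act_cancel HT Hv), E. reflexivity.
Qed.

Lemma act_base_VH p f y : sV f = p -> tV f = sH y ->
  act (base p) [inl f; inr y] = boxes_on f y.
Proof.
  intros Ef Efy. apply state_ext; intros X G; cbn; unfold base, boxes_on; split.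
  - intros [X0 [G0 [Z [[G00 [HS [E ->]]] [BZ ->]]]]].
    pose proof (box_hid f) as Hf. rewrite Ef in Hf.
    pose proof (box_hcomp (box_vcomp HS Hf) BZ) as K.
    rewrite gcomp_id_l_at in K by (symmetry; exact Efy).
    rewrite gcomp_id_l_at in K by exact Ef. exact K.
  - intros HB. destruct (box_corners HB) as [C1 _].
    exists (eH p), (cV (eV p) f), X. split; [| split].
    + exists (eV p). split; [apply base_id | split; [rewrite gtgt_id; auto | reflexivity]].
    + rewrite gcomp_id_l_at by exact Ef. exact HB.
    + rewrite gcomp_id_l_at by congruence. reflexivity.
Qed.

Lemma box_square p x g y h : Box x g y h -> sH x = p ->
  act (base p) [inr x; inl g] = act (base p) [inl h; inr y].
Proof.
  intros BA Ex. destruct (box_corners BA) as [C1 [C2 [C3 C4]]].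
  rewrite act_base_VH by congruence.
  apply state_ext; intros X G; cbn; unfold base, boxes_on; split.
  - intros [G1 [[X0 [G0 [Z [HS [BZ ->]]]]] [E ->]]].
    pose proof (box_hcomp HS BZ) as K. rewrite gcomp_id_l_at in K by exact Ex.
    pose proof (box_vcomp K BA) as K'. rewrite gcomp_id_l_at in K' by congruence.
    exact K'.
  - intros HB. destruct (box_corners HB) as [D1 [D2 [D3 D4]]].
    pose proof (box_vcomp HB (box_vinv BA)) as K.
    rewrite gcomp_inv_r, <- C1, Ex in K.
    exists (cV G (iV g)). split; [| split].
    + exists (eH p), (eV p), X. split; [apply base_id | split; [exact K |]].
      rewrite gcomp_id_l_at by congruence. reflexivity.
    + rewrite gtgt_comp, gtgt_inv; [reflexivity | rewrite gsrc_inv; congruence].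
    + rewrite gcomp_inv_cancel_r by congruence. reflexivity.
Qed.

Lemma signed_box_word_acts p s : valid D p (signed_box_word D s) ->
  end_at p (signed_box_word D s) = p /\ act (base p) (signed_box_word D s) = base p.
Proof.
  destruct s as [A [|]]; unfold signed_box_word, box_word, box_word_inv; cbn [fst snd].
  all: set (x := bt D A); set (g := br D A); set (y := bb D A); set (h := bl D A).
  all: assert (BA : Box x g y h) by (exists A; auto).
  all: destruct (box_corners BA) as [C1 [C2 [C3 C4]]]; intros [E0 _]; cbn in E0.
  - split; [unfold end_at; cbn; rewrite gtgt_inv; congruence |].
    change [inr x; inl g; inr (iH y); inl (iV h)]
      with ([inr x; inl g] ++ winv [inl h; inr y]).
    rewrite act_app, (box_square BA E0).
    apply act_cancel with (q := p); [apply state_at_base | cbn; repeat split; congruence].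
  - split; [unfold end_at; cbn; rewrite gtgt_inv; congruence |].
    change [inl h; inr y; inl (iV g); inr (iH x)]
      with ([inl h; inr y] ++ winv [inr x; inl g]).
    rewrite act_app, <- (box_square BA) by congruence.
    apply act_cancel with (q := p); [apply state_at_base | cbn; repeat split; congruence].
Qed.

Lemma inJ_acts_trivially p w : inJ D p w -> act (base p) w = base p.
Proof.
  intros [s [Hv Heq]]. rewrite <- (act_fp_equiv (state_at_base p) Heq).
  clear Heq. induction s as [| s0 s IH]; [reflexivity |].
  cbn [flat_map] in *. apply valid_app in Hv as [Hv1 Hv2].
  destruct (signed_box_word_acts Hv1) as [Eend Eact]. rewrite Eend in Hv2.
  rewrite act_app, Eact. exact (IH Hv2).
Qed.

Lemma fp_cancel p w1 a w2 : valid D p (w1 ++ linv a :: a :: w2) ->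
  fp_equiv D p (w1 ++ linv a :: a :: w2) (w1 ++ w2).
Proof.
  intros Hv. pose proof Hv as Hv'. apply valid_app in Hv' as [V1 [E1 [_ V2]]].
  destruct a as [g | x]; cbn in E1, V2; rewrite gsrc_inv in E1.
  - assert (Hm : valid D p (w1 ++ inl (eV (tV g)) :: w2))
      by (apply valid_app; split; [exact V1 | cbn; rewrite gsrc_id, gtgt_id; auto]).
    apply rst_trans with (w1 ++ inl (eV (tV g)) :: w2); apply rst_step.
    + split; [exact Hv | split; [exact Hm |]].
      rewrite <- (gcomp_inv_l (dV D) g). apply fp_mergeV, gtgt_inv.
    + split; [exact Hm | split; [| apply fp_idV]].
      apply valid_app; split; [exact V1 | rewrite <- E1; exact V2].
  - assert (Hm : valid D p (w1 ++ inr (eH (tH x)) :: w2))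
      by (apply valid_app; split; [exact V1 | cbn; rewrite gsrc_id, gtgt_id; auto]).
    apply rst_trans with (w1 ++ inr (eH (tH x)) :: w2); apply rst_step.
    + split; [exact Hv | split; [exact Hm |]].
      rewrite <- (gcomp_inv_l (dH D) x). apply fp_mergeH, gtgt_inv.
    + split; [exact Hm | split; [| apply fp_idH]].
      apply valid_app; split; [exact V1 | rewrite <- E1; exact V2].
Qed.

Lemma boxes_simB f1 f2 x1 x2 x g :
  Box x g x1 f1 -> Box x g x2 f2 -> simB D (f1, x1) (f2, x2).
Proof.
  intros B1 B2. destruct (box_corners B1) as [a1 [a2 [a3 a4]]].
  destruct (box_corners B2) as [b1 [b2 [b3 b4]]].
  destruct B1 as [A [E1 [E2 [E3 E4]]]]. destruct B2 as [A' [F1 [F2 [F3 F4]]]].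
  cbn. split; [congruence | split; [congruence |]].
  exists [(A, false); (A', true)].
  cbn. unfold box_word_inv, box_word. rewrite E1, E2, E3, E4, F1, F2, F3, F4. cbn.
  assert (Hv : valid D (sV f1)
    [inl f1; inr x1; inl (iV g); inr (iH x); inr x; inl g; inr (iH x2); inl (iV f2)]).
  { cbn. rewrite ?gsrc_inv, ?gtgt_inv. repeat split; congruence. }
  split; [exact Hv |].
  apply rst_trans with ([inl f1; inr x1; inl (iV g)] ++ [inl g; inr (iH x2); inl (iV f2)]).
  - exact (fp_cancel (w1 := [inl f1; inr x1; inl (iV g)]) (a := inr x) Hv).
  - apply (fp_cancel (w1 := [inl f1; inr x1]) (a := inl g)).
    cbn. rewrite ?gsrc_inv, ?gtgt_inv. repeat split; congruence.
Qed.

Lemma simB_boxes f1 f2 x1 x2 : tV f1 = sH x1 -> tV f2 = sH x2 ->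
  simB D (f1, x1) (f2, x2) -> exists x g, Box x g x1 f1 /\ Box x g x2 f2.
Proof.
  cbn. intros Hfx1 Hfx2 [Er [Et HJ]].
  apply inJ_acts_trivially in HJ.
  assert (HS1 : state_at (tH x2) (act (base (sV f1)) [inl f1; inr x1])).
  { rewrite <- Er. change (tH x1) with (end_at (sV f1) [inl f1; inr x1]).
    apply state_at_act; [apply state_at_base | cbn; auto]. }
  assert (HS2 : state_at (tH x2) (act (base (sV f1)) [inl f2; inr x2])).
  { change (tH x2) with (end_at (sV f1) [inl f2; inr x2]).
    apply state_at_act; [apply state_at_base | cbn; auto]. }
  assert (Hw : valid D (tH x2) (winv [inl f2; inr x2])).
  { cbn. rewrite gsrc_inv, gtgt_inv, gsrc_inv. auto. }
  assert (Same : act (base (sV f1)) [inl f1; inr x1] = act (base (sV f1)) [inl f2; inr x2]).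
  { apply (act_injective HS1 HS2 Hw).
    rewrite act_cancel with (q := sV f1); [| apply state_at_base | cbn; auto].
    rewrite <- act_app. exact HJ. }
  rewrite !act_base_VH in Same by auto.
  destruct (box_fill_bottom_left (y := x1) (f := f1)) as [x [g Bx]]; [auto |].
  exists x, g. split; [exact Bx |].
  change (boxes_on f2 x2 x g). rewrite <- Same. exact Bx.
Qed.

End DoubleGroupoid.

Theorem lemma3p4 (P V H B : Type) (D : double_groupoid P V H B)
  (Hslim : slim D) (Hfill : filling D)
  (f1 f2 : V) (x1 x2 : H)
  (Hfx1 : gtgt (dV D) f1 = gsrc (dH D) x1)
  (Hfx2 : gtgt (dV D) f2 = gsrc (dH D) x2) :
  simB D (f1, x1) (f2, x2) <->
  exists (x : H) (g : V) (A B0 : B),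
    bt D A = x /\ br D A = g /\ bl D A = f1 /\ bb D A = x1 /\
    bt D B0 = x /\ br D B0 = g /\ bl D B0 = f2 /\ bb D B0 = x2.
Proof.
  split.
  - intros Hsim.
    destruct (simB_boxes Hfill Hfx1 Hfx2 Hsim)
      as [x [g [[A [E1 [E2 [E3 E4]]]] [A' [F1 [F2 [F3 F4]]]]]]].
    exists x, g, A, A'. auto 10.
  - intros [x [g [A [A' [E1 [E2 [E3 [E4 [F1 [F2 [F3 F4]]]]]]]]]]].
    apply (boxes_simB (x := x) (g := g)); [exists A | exists A']; auto.
Qed.
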